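(* If $\mathsf H$ is a variety of infinitary clone $\tau$-algebras, then $\mathsf H^{\nabla}$ is a variety of $\tau$-algebras.
   Context: $\tau$ is a set of $\omega$-ary operation symbols disjoint from $\{q\}\cup\{e_i:i\in\omega\}$; a $\tau$-algebra is $\mathbf A=(A,f^{\mathbf A})_{f\in\tau}$ with $f^{\mathbf A}:A^\omega\to A$. A variety is a class closed under isomorphic copies, homomorphic images, subalgebras and arbitrary direct products. $\bar\tau$ is the type with nullary $e_i$ ($i\in\omega$), nullary $f$ for each $f\in\tau$, and $\omega$-ary $q$. An infinitary clone $\tau$-algebra is a $\bar\tau$-algebra satisfying (N1) $q(e_i,x_0,x_1,\dots)=x_i$; (N2) $q(x,e_0,e_1,\dots)=x$; (N3) $q(q(x,y_0,y_1,\dots),\boldsymbol z)=q(x,q(y_0,\boldsymbol z),q(y_1,\boldsymbol z),\dots)$ with $\boldsymbol z=(z_0,z_1,\dots)$. For a $\tau$-algebra $\mathbf A$, $\mathcal O^{(\omega)}_{\mathbf A}$ is the infinitary clone $\tau$-algebra of all functions $A^\omega\to A$ with $e_i(s)=s_i$, $q(g_0,g_1,\dots)(s)=g_0(g_1(s),g_2(s),\dots)$, constant $f$ interpreted as $f^{\mathbf A}$; $\mathsf{FCA}(\mathbf A)$ is the class of its subalgebras. For a class $\mathsf H$ of infinitary clone $\tau$-algebras, $\mathsf H^{\nabla}$ is the class of $\tau$-algebras isomorphic to some $\mathbf A$ such that $\mathsf{FCA}(\mathbf A)\cap\mathsf H\neq\emptyset$. *)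

Record signature := Signature { sym : Type; ar : sym -> Type }.

Record algebra (S : signature) := Algebra {
  car : Type;
  op : forall o : sym S, (ar S o -> car) -> car }.
Arguments car {S} _.
Arguments op {S} _ _ _.

Definition is_hom {S : signature} (A B : algebra S) (h : car A -> car B) : Prop :=
  forall (o : sym S) (x : ar S o -> car A), h (op A o x) = op B o (fun i => h (x i)).

Definition injective {X Y : Type} (f : X -> Y) : Prop := forall a b, f a = f b -> a = b.
Definition surjective {X Y : Type} (f : X -> Y) : Prop := forall y, exists x, f x = y.

Definition subuniverse {S : signature} (A : algebra S) (P : car A -> Prop) : Prop :=
  forall (o : sym S) (x : ar S o -> car A), (forall i, P (x i)) -> P (op A o x).

Definition subalg {S : signature} (A : algebra S) (P : car A -> Prop)
  (hP : subuniverse A P) : algebra S :=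
  {| car := { a : car A | P a };
     op := fun o x => exist P (op A o (fun i => proj1_sig (x i)))
                            (hP o _ (fun i => proj2_sig (x i))) |}.

Definition prodalg {S : signature} {I : Type} (F : I -> algebra S) : algebra S :=
  {| car := forall i : I, car (F i);
     op := fun o x => fun i => op (F i) o (fun j => x j i) |}.

Definition closed_I {S : signature} (K : algebra S -> Prop) : Prop :=
  forall (A B : algebra S) (h : car A -> car B),
    is_hom A B h -> injective h -> surjective h -> K A -> K B.
Definition closed_H {S : signature} (K : algebra S -> Prop) : Prop :=
  forall (A B : algebra S) (h : car A -> car B),
    is_hom A B h -> surjective h -> K A -> K B.
Definition closed_S {S : signature} (K : algebra S -> Prop) : Prop :=
  forall (A : algebra S) (P : car A -> Prop) (hP : subuniverse A P),
    K A -> K (subalg A P hP).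
Definition closed_P {S : signature} (K : algebra S -> Prop) : Prop :=
  forall (I : Type) (F : I -> algebra S), (forall i, K (F i)) -> K (prodalg F).
Definition variety {S : signature} (K : algebra S -> Prop) : Prop :=
  closed_I K /\ closed_H K /\ closed_S K /\ closed_P K.

Definition tau_sig (tau : Type) : signature := {| sym := tau; ar := fun _ => nat |}.

Inductive tbar_sym (tau : Type) : Type :=
| Sym_e (i : nat)
| Sym_f (f : tau)
| Sym_q.
Arguments Sym_e {tau} i.
Arguments Sym_f {tau} f.
Arguments Sym_q {tau}.

Definition tbar_ar {tau : Type} (o : tbar_sym tau) : Type :=
  match o with
  | Sym_e _ => Empty_set
  | Sym_f _ => Empty_set
  | Sym_q => nat
  end.

Definition tbar_sig (tau : Type) : signature := {| sym := tbar_sym tau; ar := @tbar_ar tau |}.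

Definition no_args {X : Type} : Empty_set -> X := fun v => match v with end.

(** Derived notations inside a tau-bar algebra. The omega-ary q is applied to a
    sequence s with s 0 = x, s (n+1) = y_n, i.e. q(x, y_0, y_1, ...). *)
Definition ce {tau} (C : algebra (tbar_sig tau)) (i : nat) : car C := op C (Sym_e i) no_args.
Definition cq {tau} (C : algebra (tbar_sig tau)) (s : nat -> car C) : car C := op C Sym_q s.

Definition scons {X : Type} (x : X) (s : nat -> X) : nat -> X :=
  fun n => match n with 0 => x | S m => s m end.

Definition clone_alg {tau} (C : algebra (tbar_sig tau)) : Prop :=
  (forall (x : nat -> car C) (i : nat), cq C (scons (ce C i) x) = x i) /\
  (forall x : car C, cq C (scons x (ce C)) = x) /\
  (forall (x : car C) (y z : nat -> car C),
      cq C (scons (cq C (scons x y)) z) =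
      cq C (scons x (fun n => cq C (scons (y n) z)))).

Definition O_op {tau} (A : algebra (tau_sig tau)) (o : tbar_sym tau) :
  (tbar_ar o -> ((nat -> car A) -> car A)) -> ((nat -> car A) -> car A) :=
  match o as o0 return (tbar_ar o0 -> ((nat -> car A) -> car A)) -> ((nat -> car A) -> car A) with
  | Sym_e i => fun _ s => s i
  | Sym_f f => fun _ => op A f
  | Sym_q => fun g s => g 0 (fun n => g (S n) s)
  end.

Definition O_alg {tau} (A : algebra (tau_sig tau)) : algebra (tbar_sig tau) :=
  @Algebra (tbar_sig tau) ((nat -> car A) -> car A) (O_op A).

(** FCA(A): the subalgebras of O^(omega)_A; membership of a class H. *)
Definition FCA_meets {tau} (A : algebra (tau_sig tau)) (H : algebra (tbar_sig tau) -> Prop) : Prop :=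
  exists (P : car (O_alg A) -> Prop) (hP : subuniverse (O_alg A) P), H (subalg (O_alg A) P hP).

Definition nabla {tau} (H : algebra (tbar_sig tau) -> Prop) : algebra (tau_sig tau) -> Prop :=
  fun B => exists (A : algebra (tau_sig tau)) (h : car A -> car B),
      is_hom A B h /\ injective h /\ surjective h /\ FCA_meets A H.

(* A member of FCA(A) is a subalgebra of O_A, so FCA(A) meets a class K closed
   under H and S as soon as some D in K maps homomorphically into O_A (take the
   image of D).  For a surjective homomorphism k : A -> B, the operations of O_A
   compatible with ker k form a subalgebra mapping onto a subalgebra of O_B by
   f |-> k o f o sec for a section sec of k; for an injective j : B -> A, the
   operations of O_A preserving the range of j restrict to operations on B; and
   a product of subalgebras of the O_(A_i) maps into O_(prod A_i) coordinatewise.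
   Hence H^nabla is exactly the class of A with FCA(A) meeting H, and it is
   closed under I, H, S and P. *)

From Stdlib Require Import FunctionalExtensionality ProofIrrelevance IndefiniteDescription.

Lemma val_inj {X : Type} (P : X -> Prop) (x y : sig P) :
  proj1_sig x = proj1_sig y -> x = y.
Proof. apply eq_sig_hprop; intros; apply proof_irrelevance. Qed.

Lemma dependent_functional_choice {I : Type} {T : I -> Type} (R : forall i, T i -> Prop) :
  (forall i, exists t, R i t) -> exists f : forall i, T i, forall i, R i (f i).
Proof.
  intro h.
  exists (fun i => proj1_sig (constructive_indefinite_description _ (h i))).
  intro i; exact (proj2_sig (constructive_indefinite_description _ (h i))).
Qed.

Section Closure.
Variable S : signature.

Lemma subalg_val_hom (A : algebra S) (P : car A -> Prop) (hP : subuniverse A P) :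
  is_hom (subalg A P hP) A (@proj1_sig _ P).
Proof. intros o x; reflexivity. Qed.

Lemma subalg_val_injective (A : algebra S) (P : car A -> Prop) (hP : subuniverse A P) :
  injective (@proj1_sig _ P : car (subalg A P hP) -> car A).
Proof. intros x y; apply val_inj. Qed.

Lemma subuniverse_subalg (A : algebra S) (P Q : car A -> Prop) (hP : subuniverse A P) :
  subuniverse A Q -> subuniverse (subalg A P hP) (fun x => Q (proj1_sig x)).
Proof. intros hQ o x hx; exact (hQ o _ hx). Qed.

Lemma closed_I_of_closed_H (K : algebra S -> Prop) : closed_H K -> closed_I K.
Proof. intros HK A B h hh _ sh; exact (HK A B h hh sh). Qed.

Definition range {X Y : Type} (f : X -> Y) (y : Y) : Prop := exists x, f x = y.

Lemma range_subuniverse (D A : algebra S) (phi : car D -> car A) :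
  is_hom D A phi -> subuniverse A (range phi).
Proof.
  intros hphi o x hx.
  destruct (functional_choice _ hx) as [d hd].
  exists (op D o d); rewrite hphi; f_equal.
  apply functional_extensionality; exact hd.
Qed.

Lemma closed_H_range (K : algebra S -> Prop) (D A : algebra S) (phi : car D -> car A)
  (hphi : is_hom D A phi) :
  closed_H K -> K D -> K (subalg A (range phi) (range_subuniverse D A phi hphi)).
Proof.
  intros HK HD.
  apply (HK D (subalg A (range phi) _) (fun d => exist (range phi) (phi d) (ex_intro _ d eq_refl))); auto.
  - intros o x; apply val_inj; apply hphi.
  - intros [a [d <-]]; exists d; apply val_inj; reflexivity.
Qed.

End Closure.

Section FunctionalClones.
Variable tau : Type.
Variable K : algebra (tbar_sig tau) -> Prop.
Hypothesis K_closed_H : closed_H K.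

Lemma fca_meets_hom (D : algebra (tbar_sig tau)) (A : algebra (tau_sig tau))
  (phi : car D -> car (O_alg A)) : is_hom D (O_alg A) phi -> K D -> FCA_meets A K.
Proof.
  intros hphi HD.
  exists (range phi), (range_subuniverse _ D _ phi hphi).
  exact (closed_H_range _ K D _ phi hphi K_closed_H HD).
Qed.

Hypothesis K_closed_S : closed_S K.

(* Intersect a member of K inside FCA(A) with [Q]; what remains maps into O_B. *)
Lemma fca_meets_transfer (A B : algebra (tau_sig tau)) (Q : car (O_alg A) -> Prop)
  (hQ : subuniverse (O_alg A) Q) (phi : car (subalg (O_alg A) Q hQ) -> car (O_alg B)) :
  is_hom (subalg (O_alg A) Q hQ) (O_alg B) phi -> FCA_meets A K -> FCA_meets B K.
Proof.
  intros hphi [P [hP HC]].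
  set (C := subalg (O_alg A) P hP) in *.
  set (hQC := subuniverse_subalg _ _ P Q hP hQ).
  set (restrict := fun c : car (subalg C _ hQC) =>
                     exist Q (proj1_sig (proj1_sig c)) (proj2_sig c)).
  apply (fca_meets_hom (subalg C _ hQC) B (fun c => phi (restrict c))).
  - intros o x; rewrite <- hphi; f_equal; apply val_inj; reflexivity.
  - exact (K_closed_S C _ hQC HC).
Qed.

Section Surjective.
Variables A B : algebra (tau_sig tau).
Variable k : car A -> car B.
Hypothesis k_hom : is_hom A B k.
Hypothesis k_surjective : surjective k.

Definition kernel_compatible (f : car (O_alg A)) : Prop :=
  forall s t : nat -> car A, (forall n, k (s n) = k (t n)) -> k (f s) = k (f t).

Lemma kernel_compatible_subuniverse : subuniverse (O_alg A) kernel_compatible.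
Proof.
  intros [i|f|] x hx s t e; simpl.
  - apply e.
  - rewrite !k_hom; f_equal; apply functional_extensionality; exact e.
  - apply (hx 0); intro n; apply (hx (S n)); exact e.
Qed.

Lemma fca_meets_hom_surjective : FCA_meets A K -> FCA_meets B K.
Proof.
  destruct (functional_choice _ k_surjective) as [sec hsec].
  apply (fca_meets_transfer A B _ kernel_compatible_subuniverse
           (fun f s => k (proj1_sig f (fun n => sec (s n))))).
  intros [i|f|] x; apply functional_extensionality; intro s; simpl.
  - apply hsec.
  - rewrite k_hom; f_equal; apply functional_extensionality; intro; apply hsec.
  - apply (proj2_sig (x 0)); intro n; rewrite hsec; reflexivity.
Qed.

End Surjective.

Section Injective.
Variables A B : algebra (tau_sig tau).
Variable j : car B -> car A.
Hypothesis j_hom : is_hom B A j.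
Hypothesis j_injective : injective j.

Definition preserves_range (f : car (O_alg A)) : Prop :=
  forall s : nat -> car B, range j (f (fun n => j (s n))).

Lemma preserves_range_subuniverse : subuniverse (O_alg A) preserves_range.
Proof.
  intros [i|f|] x hx s; simpl.
  - exists (s i); reflexivity.
  - exists (op B f s); apply j_hom.
  - destruct (functional_choice _ (fun n => hx (S n) s)) as [b hb].
    destruct (hx 0 b) as [b0 e]; exists b0; rewrite e; f_equal.
    apply functional_extensionality; exact hb.
Qed.

Lemma fca_meets_hom_injective : FCA_meets A K -> FCA_meets B K.
Proof.
  set (D := subalg (O_alg A) _ preserves_range_subuniverse).
  destruct (functional_choice
              (fun (p : car D * (nat -> car B)) b =>
                 j b = proj1_sig (fst p) (fun n => j (snd p n)))
              (fun p => proj2_sig (fst p) (snd p))) as [g hg].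
  apply (fca_meets_transfer A B _ _ (fun f s => g (f, s))).
  intros o x; apply functional_extensionality; intro s; apply j_injective.
  rewrite hg; destruct o as [i|f|]; simpl.
  - reflexivity.
  - symmetry; apply j_hom.
  - rewrite hg; simpl; f_equal; apply functional_extensionality; intro n.
    rewrite hg; reflexivity.
Qed.

End Injective.

Lemma fca_meets_prodalg (I : Type) (G : I -> algebra (tau_sig tau)) :
  closed_P K -> (forall i, FCA_meets (G i) K) -> FCA_meets (prodalg G) K.
Proof.
  intros K_closed_P hG.
  destruct (dependent_functional_choice
              (T := fun i => { P : car (O_alg (G i)) -> Prop & subuniverse _ P })
              (fun i p => K (subalg _ (projT1 p) (projT2 p))))
    as [c hc].
  { intro i; destruct (hG i) as [P [hP HC]]; exists (existT _ P hP); exact HC. }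
  apply (fca_meets_hom (prodalg (fun i => subalg _ (projT1 (c i)) (projT2 (c i)))) _
           (fun f (s : nat -> car (prodalg G)) i => proj1_sig (f i) (fun n => s n i))).
  - intros [l|g|] x; reflexivity.
  - apply K_closed_P; exact hc.
Qed.

Lemma nabla_fca_meets (B : algebra (tau_sig tau)) : nabla K B <-> FCA_meets B K.
Proof.
  split.
  - intros [A [h [hh [_ [sh HA]]]]]; exact (fca_meets_hom_surjective A B h hh sh HA).
  - intro HB; exists B, (fun b => b); repeat split; auto.
    + intros a b e; exact e.
    + intro b; exists b; reflexivity.
Qed.

End FunctionalClones.

Theorem theorem5p4 (tau : Type) (H : algebra (tbar_sig tau) -> Prop) :
  (forall C, H C -> clone_alg C) -> variety H -> variety (nabla H).
Proof.
  intros _ [_ [HH [HS HP]]].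
  assert (nablaP := nabla_fca_meets tau H HH HS).
  assert (nabla_closed_H : closed_H (nabla H)).
  { intros A B h hh sh HA; apply nablaP.
    exact (fca_meets_hom_surjective tau H HH HS A B h hh sh (proj1 (nablaP A) HA)). }
  split; [exact (closed_I_of_closed_H _ _ nabla_closed_H) |].
  split; [exact nabla_closed_H | split].
  - intros A P hP HA; apply nablaP.
    exact (fca_meets_hom_injective tau H HH HS A _ _
             (subalg_val_hom _ A P hP) (subalg_val_injective _ A P hP) (proj1 (nablaP A) HA)).
  - intros I F hF; apply nablaP.
    apply fca_meets_prodalg; auto.
    intro i; apply nablaP, hF.
Qed.
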